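(* Assume $\delta_0=0$ and $$\mu(\mathcal M,W):=\tfrac12\sup_{\sigma>0}\frac{\delta_\sigma}{\sigma}<\infty.$$ Then for every $u\in\mathcal M$ with $w=P_Wu$, the estimator $u^*=u^*(w)$ obtained by surrogate model selection satisfies $$\|u-u^*\|\le C\min_{k=1,\dots,K}\|u-u_k^*(w)\|,\qquad C:=2\mu(\mathcal M,W)\kappa.$$ If moreover the family is $\sigma$-admissible for some $\sigma>0$, then $\|u-u^*\|\le C\sigma$.
   Context: Let $V$ be a real Hilbert space with norm $\|\cdot\|$. Let $Y\subset\mathbb R^d$ be compact and let $y\mapsto u(y)$ be a continuous map from $Y$ to $V$. Set $\mathcal M=\{u(y):y\in Y\}$, which is compact. Let $W\subset V$ be a linear subspace of finite dimension $m$, let $P_W$ be the orthogonal projection onto $W$, and let $W^\perp$ be its orthogonal complement. For $w\in W$ put $V_w=w+W^\perp$. For $\sigma\ge 0$ define - $\mathcal M_\sigma=\{v\in V:\operatorname{dist}(v,\mathcal M)\le\sigma\}$; - $\delta_\sigma=\sup\{\|u-v\|: u,v\in\mathcal M_\sigma,\ u-v\in W^\perp\}$. For a finite-dimensional subspace $E\subset V$ let $\mu(E,W)=\sup_{v\in E\setminus\{0\}}\|v\|/\|P_Wv\|$, with the conventions $\mu(\{0\},W)=1$ and $\mu(E,W)=+\infty$ if $E\cap W^\perp\ne\{0\}$. A reduced model family consists of: - sets $\mathcal M_1,\dots,\mathcal M_K$ with $\mathcal M=\bigcup_{k=1}^K\mathcal M_k$; - affine spaces $V_k=\bar u_k+\bar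 V_k$, where $\bar u_k\in V$ and $\bar V_k$ is a linear subspace of dimension $n_k\le m$; - numbers $\varepsilon_k\ge\sup_{u\in\mathcal M_k}\operatorname{dist}(u,V_k)$; - constants $\mu_k=\mu(\bar V_k,W)<\infty$. The family is $\sigma$-admissible if $\mu_k\varepsilon_k\le\sigma$ for all $k$. For $w\in W$ the PBDW estimators are $u_k^*(w)=\operatorname{argmin}\{\operatorname{dist}(v,V_k): v\in V_w\}$, $k=1,\dots,K$ (the minimizer is unique). A surrogate is a function $\mathcal S(\cdot,\mathcal M):V\to[0,\infty)$ with $r\operatorname{dist}(v,\mathcal M)\le\mathcal S(v,\mathcal M)\le R\operatorname{dist}(v,\mathcal M)$ for all $v\in V$, where $0<r\le R$ are constants; set $\kappa=R/r$. Surrogate model selection picks $k^*(w)$ as any minimizer of $k\mapsto\mathcal S(u_k^*(w),\mathcal M)$ over $\{1,\dots,K\}$ and sets $u^*(w)=u^*_{k^*(w)}(w)$. *)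

From HB Require Import structures.
From mathcomp Require Import all_boot all_order all_algebra.
From mathcomp Require Import all_classical all_reals all_analysis.
Set Implicit Arguments. Unset Strict Implicit. Unset Printing Implicit Defensive.
Import Order.TTheory GRing.Theory Num.Theory.
Import numFieldNormedType.Exports.
Local Open Scope classical_set_scope.
Local Open Scope ring_scope.

Section Defs.
Context {R : realType} {V : normedModType R}.

Definition is_inner_product (ip : V -> V -> R) : Prop :=
  [/\ (forall x y, ip x y = ip y x),
      (forall a x y z, ip (a *: x + y) z = a * ip x z + ip y z)
    & (forall x, ip x x = `|x| ^+ 2)].

Definition lspan (s : seq V) : set V :=
  [set v | exists c : 'I_(size s) -> R, v = \sum_(i < size s) c i *: s`_i].

Definition lin_indep (s : seq V) : Prop :=
  forall c : 'I_(size s) -> R,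
    \sum_(i < size s) c i *: s`_i = 0 -> forall i, c i = 0.

Definition orth (ip : V -> V -> R) (W : set V) : set V :=
  [set v | forall x, W x -> ip v x = 0].

Definition is_orth_proj (ip : V -> V -> R) (W : set V) (P : V -> V) : Prop :=
  forall v, W (P v) /\ orth ip W (v - P v).

Definition affine (ubar : V) (b : seq V) : set V :=
  [set ubar + x | x in lspan b].

Definition Vw (ip : V -> V -> R) (W : set V) (w : V) : set V :=
  [set v | orth ip W (v - w)].

Definition setdist (v : V) (A : set V) : R := inf [set `|v - x| | x in A].

Definition Msig (M : set V) (s : R) : set V := [set v | setdist v M <= s].

Definition delta (ip : V -> V -> R) (W M : set V) (s : R) : \bar R :=
  ereal_sup [set (`|p.1 - p.2|)%:E | p in
     [set p : V * V | [/\ Msig M s p.1, Msig M s p.2 & orth ip W (p.1 - p.2)]]].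

Definition muMW (ip : V -> V -> R) (W M : set V) : \bar R :=
  ((2^-1)%:E * ereal_sup [set (delta ip W M s * (s^-1)%:E)%E | s in [set s : R | (0 < s)%R]])%E.

Definition muEW (ip : V -> V -> R) (W : set V) (P : V -> V) (E : set V) : \bar R :=
  if `[< exists v, [/\ E v, v != 0 & orth ip W v] >] then +oo%E
  else if `[< E `<=` [set 0] >] then 1%E
  else ereal_sup [set (`|v| / `|P v|)%:E | v in [set v | E v /\ v != 0]].

End Defs.

From HB Require Import structures.
From mathcomp Require Import all_boot all_order all_algebra.
From mathcomp Require Import all_classical all_reals all_analysis.
From mathcomp Require Import ring lra.
Import Order.TTheory GRing.Theory Num.Theory.
Import numFieldNormedType.Exports.
Local Open Scope classical_set_scope.
Local Open Scope ring_scope.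

(* Let u in M, w = P_W u, and let u* = u*_{k*}(w) be the selected estimator.
   1. Every estimator u_k*(w) lies in V_w, so u - u_k*(w) lies in W^perp.
   2. By definition of delta_sigma, a pair (u, v) with u - v in W^perp and
      v at distance sigma from M satisfies |u - v| <= delta_sigma, hence
      |u - v| <= 2 mu(M,W) dist(v, M) (using delta_0 = 0 when sigma = 0).
   3. The surrogate is equivalent to dist(., M) up to the constants r, R, so
      the selected k* satisfies dist(u*, M) <= kappa dist(u_k*, M)
      <= kappa |u - u_k*|.  Steps 2 and 3 give the first claim.
   4. For the second claim, u lies in some M_k, and the classical PBDW
      estimate |u - u_k*(w)| <= mu_k dist(u, V_k) <= mu_k eps_k <= sigma
      applies.  Since distances to V_k are defined as infima, the PBDW
      estimate is proved with approximate nearest points y of u_k* in V_k: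
      u_k* - y is then almost orthogonal to W^perp and to bar V_k, and a
      Pythagoras/Cauchy-Schwarz computation yields the estimate up to an
      error that is let go to zero. *)

Section SetDistance.
Context {R : realType} {V : normedModType R}.
Implicit Types (v a : V) (A : set V).

Lemma setdist_le v {A a} : A a -> setdist v A <= `|v - a|.
Proof.
move=> Aa; apply: ge_inf; last by exists a.
by exists 0 => _ [y _ <-].
Qed.

Lemma setdist_ge v A c : A !=set0 ->
  (forall a, A a -> c <= `|v - a|) -> c <= setdist v A.
Proof.
move=> [a Aa] lb; apply: lb_le_inf; first by exists `|v - a|, a.
by move=> _ [y Ay <-]; apply: lb.
Qed.

Lemma setdist_ge0 v {A} : A !=set0 -> 0 <= setdist v A.
Proof. by move=> A0; apply: setdist_ge. Qed.

Lemma setdist_approx_sq v {A e} : A !=set0 -> 0 < e ->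
  exists2 a, A a & `|v - a| ^+ 2 <= setdist v A ^+ 2 + e.
Proof.
move=> A0 e0; set D := setdist v A.
have D0 : 0 <= D := setdist_ge0 v A0.
set eta := Num.min 1 (e / (2 * D + 1)).
have eta0 : 0 < eta by rewrite lt_min ltr01 divr_gt0 //; lra.
have eta1 : eta <= 1 by rewrite ge_min lexx.
have etaD : eta * (2 * D + 1) <= e.
  by rewrite -ler_pdivlMr 1?ge_min ?lexx ?orbT //; lra.
have [_ [a Aa <-] lt_a] : exists2 y, [set `|v - x| | x in A] y & y < D + eta.
  apply: inf_lt; last by rewrite ltrDl.
  by case: A0 => a Aa; exists `|v - a|, a.
exists a => //; have va0 := normr_ge0 (v - a).
have : `|v - a| ^+ 2 <= (D + eta) ^+ 2 by rewrite ler_sqr ?nnegrE; lra.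
nra.
Qed.

End SetDistance.

Section ScalarInequalities.
Context {R : rcfType}.

(* Cauchy-Schwarz in R^2: s + c <= mu |(s, a)| when c^2 <= (mu^2 - 1) a^2. *)
Lemma add_le_sqrt_sum (s a c mu : R) : 0 <= s -> 0 <= a -> 0 <= c -> 1 <= mu ->
  a ^+ 2 + c ^+ 2 <= mu ^+ 2 * a ^+ 2 -> s + c <= mu * Num.sqrt (s ^+ 2 + a ^+ 2).
Proof.
move=> s0 a0 c0 mu1 hc; have Y0 := sqrtr_ge0 (s ^+ 2 + a ^+ 2).
rewrite -ler_sqr ?nnegrE; last 2 first.
- lra.
- by apply: mulr_ge0 => //; lra.
rewrite exprMn sqr_sqrtr; last nra.
have [a_eq0|a_gt0] := eqVneq a 0.
  move: hc; rewrite a_eq0 expr0n /= mulr0 add0r => c2_le0.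
  have -> : c = 0 by apply/eqP; rewrite eq_le c0 andbT; nra.
  rewrite addr0; have : 1 <= mu ^+ 2 by nra.
  nra.
have a2 : 0 < a ^+ 2 by rewrite exprn_gt0 // lt_def a_gt0.
rewrite -(ler_pM2l a2).
have cs : a ^+ 2 * (s + c) ^+ 2 <= (s ^+ 2 + a ^+ 2) * (a ^+ 2 + c ^+ 2).
  have := sqr_ge0 (s * c - a ^+ 2); lra.
apply: (le_trans cs); rewrite mulrCA mulrA [X in X <= _]mulrC.
by apply: ler_wpM2r; first nra.
Qed.

Lemma sq_le_affine {y n l : R} : 0 <= y -> 0 <= n -> 0 <= l ->
  y ^+ 2 <= n ^+ 2 + 2 * l * y -> y <= n + 2 * l.
Proof.
move=> y0 n0 l0 h; rewrite leNgt; apply/negP => lt_y; nra.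
Qed.

End ScalarInequalities.

Section Span.
Context {R : realType} {V : normedModType R}.
Implicit Types (s : seq V) (x y g : V).

Lemma lspan_lin {s} a {x y} : lspan s x -> lspan s y -> lspan s (a *: x + y).
Proof.
move=> [cx ->] [cy ->]; exists (fun i => a * cx i + cy i).
rewrite scaler_sumr -big_split /=; apply: eq_bigr => i _.
by rewrite scalerDl scalerA.
Qed.

Lemma lspan0 s : lspan s 0.
Proof. by exists (fun _ => 0); rewrite big1 // => i _; rewrite scale0r. Qed.

Lemma lspanZ {s} a {x} : lspan s x -> lspan s (a *: x).
Proof. by move=> sx; have := lspan_lin a sx (lspan0 s); rewrite addr0. Qed.

Lemma affine_diff {ub s x y} : affine ub s x -> affine ub s y -> lspan s (x - y).
Proof.
move=> [gx sx <-] [gy sy <-]; rewrite opprD addrACA subrr add0r.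
by have := lspan_lin (-1) sy sx; rewrite scaleN1r addrC.
Qed.

Lemma affine_add {ub s x g} : affine ub s x -> lspan s g -> affine ub s (x + g).
Proof.
move=> [h sh <-] sg; exists (h + g); last by rewrite addrA.
by have := lspan_lin 1 sh sg; rewrite scale1r.
Qed.

End Span.

Section InnerProduct.
Context {R : realType} {V : normedModType R}.
Context {ip : V -> V -> R} (ip_inner : is_inner_product ip).

Lemma ipC x y : ip x y = ip y x.
Proof. by case: ip_inner. Qed.

Lemma ipL a x y z : ip (a *: x + y) z = a * ip x z + ip y z.
Proof. by case: ip_inner. Qed.

Lemma ipn x : ip x x = `|x| ^+ 2.
Proof. by case: ip_inner. Qed.

Lemma ip0l z : ip 0 z = 0.
Proof. by have := ipL 1 0 0 z; rewrite scale1r addr0 mul1r; lra. Qed.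

Lemma ipZl a x z : ip (a *: x) z = a * ip x z.
Proof. by have := ipL a x 0 z; rewrite addr0 ip0l addr0. Qed.

Lemma ipDl x y z : ip (x + y) z = ip x z + ip y z.
Proof. by have := ipL 1 x y z; rewrite scale1r mul1r. Qed.

Lemma ipBl x y z : ip (x - y) z = ip x z - ip y z.
Proof. by rewrite ipDl -scaleN1r ipZl mulN1r. Qed.

Lemma ipDr x y z : ip z (x + y) = ip z x + ip z y.
Proof. by rewrite ipC ipDl !(ipC z). Qed.

Lemma ipBr x y z : ip z (x - y) = ip z x - ip z y.
Proof. by rewrite ipC ipBl !(ipC z). Qed.

Lemma ipZr a x z : ip z (a *: x) = a * ip z x.
Proof. by rewrite ipC ipZl ipC. Qed.

Lemma normD2 x y : `|x + y| ^+ 2 = `|x| ^+ 2 + 2 * ip x y + `|y| ^+ 2.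
Proof. by rewrite -!ipn ipDl !ipDr (ipC y x); lra. Qed.

Lemma orthD {W : set V} {x y : V} : orth ip W x -> orth ip W y -> orth ip W (x + y).
Proof. by move=> Wx Wy z Wz; rewrite ipDl Wx // Wy // addr0. Qed.

Lemma orthZ {W : set V} a {x : V} : orth ip W x -> orth ip W (a *: x).
Proof. by move=> Wx z Wz; rewrite ipZl Wx // mulr0. Qed.

Lemma Vw_proj_orth {W P v v'} : is_orth_proj ip W P ->
  Vw ip W (P v) v' -> orth ip W (v - v').
Proof.
move=> HP Hv'; have := orthD (HP v).2 (orthZ (-1) Hv').
by rewrite scaleN1r opprB addrA subrK.
Qed.

Lemma proj_le {W P} v : is_orth_proj ip W P -> `|P v| <= `|v|.
Proof.
move=> HP; have [Wp Nq] := HP v.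
have pyth : `|v| ^+ 2 = `|P v| ^+ 2 + `|v - P v| ^+ 2.
  by rewrite -{1}(subrKC (P v) v) normD2 ipC Nq // mulr0 addr0.
by rewrite -ler_sqr ?nnegrE // pyth lerDl sqr_ge0.
Qed.

Lemma approx_orth d m (D dl : R) : 0 <= D -> 0 <= dl ->
  `|d| ^+ 2 <= D ^+ 2 + dl ^+ 2 ->
  (forall s, D <= `|d + s *: m|) -> `|ip d m| <= dl * `|m|.
Proof.
move=> D0 dl0 hd far.
have quad s : 0 <= dl ^+ 2 + 2 * s * ip d m + s ^+ 2 * `|m| ^+ 2.
  have : D ^+ 2 <= `|d + s *: m| ^+ 2 by rewrite ler_sqr ?nnegrE.
  by rewrite normD2 ipZr normrZ exprMn real_normK ?num_real //; lra.
have [m0|m_neq0] := eqVneq m 0.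
  by rewrite m0 ipC ip0l !normr0 mulr0.
have m2 : 0 < `|m| ^+ 2 by rewrite exprn_gt0 // normr_gt0.
rewrite -ler_sqr ?nnegrE ?mulr_ge0 // exprMn real_normK ?num_real //.
have := quad (- ip d m / `|m| ^+ 2).
set p := ip d m; set M2 := `|m| ^+ 2.
have -> : dl ^+ 2 + 2 * (- p / M2) * p + (- p / M2) ^+ 2 * M2
        = dl ^+ 2 - p ^+ 2 / M2 by field; rewrite gt_eqF.
by rewrite subr_ge0 ler_pdivrMr.
Qed.

Lemma muEW_bound {W P E} : is_orth_proj ip W P -> (muEW ip W P E < +oo)%E ->
  1 <= fine (muEW ip W P E) /\
  forall g, E g -> `|g| <= fine (muEW ip W P E) * `|P g|.
Proof.
move=> HP; rewrite /muEW.
case: asboolP => [_|no_orth]; first by rewrite ltxx.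
case: asboolP => [E0 _|E_nontriv mu_fin].
  split => //= g Eg; rewrite (E0 g Eg) normr0 mul1r; exact: normr_ge0.
have [v Ev v0] : exists2 v, E v & v != 0.
  apply: contrapT => none; apply: E_nontriv => v' Ev'; apply: contrapT => nv.
  by apply: none; exists v' => //; apply/eqP.
have Pg_gt0 g : E g -> g != 0 -> 0 < `|P g|.
  move=> Eg g0; rewrite normr_gt0; apply/negP => /eqP Pg0; apply: no_orth.
  by exists g; split => //; have := (HP g).2; rewrite Pg0 subr0.
set ratios := [set _ | _ in _] in mu_fin *.
have ub g : E g -> g != 0 -> ((`|g| / `|P g|)%:E <= ereal_sup ratios)%E.
  by move=> Eg g0; apply: ereal_sup_ubound; exists g.
have ratio_ge1 : 1 <= `|v| / `|P v|.
  by rewrite ler_pdivlMr ?Pg_gt0 // mul1r (proj_le v HP).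
move: mu_fin ub; case: (ereal_sup ratios) => [m| |] mu_fin ub //=; last first.
  by have := ub v Ev v0.
have m_ge1 : 1 <= m by apply: le_trans ratio_ge1 _; rewrite -lee_fin; apply: ub.
split=> // g Eg; have [->|g0] := eqVneq g 0.
  by rewrite normr0 mulr_ge0 ?normr_ge0 //; lra.
by rewrite -ler_pdivrMr ?Pg_gt0 // -lee_fin; apply: ub.
Qed.

Section PBDW.
Context {W : set V} {P : V -> V} {bs : seq V} {ub : V} {mu : R}.
Context (HP : is_orth_proj ip W P) (mu_ge1 : 1 <= mu).
Context (stable : forall g, lspan bs g -> `|g| <= mu * `|P g|).

(* Core computation: e in W^perp is the error, d the gap to an almost nearest
   point (almost orthogonal to W^perp and to lspan bs), g in lspan bs. *)
Lemma pbdw_estimate {e d g dl} : 0 <= dl -> orth ip W e -> lspan bs g ->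
  (forall m, orth ip W m \/ lspan bs m -> `|ip d m| <= dl * `|m|) ->
  `|e| <= mu * (`|e + d + g| + 2 * ((1 + 2 * mu) * dl)).
Proof.
move=> dl0 We bs_g near_orth.
set p := P g; set q := g - p.
have Wp : W p := (HP g).1.
have Wq : orth ip W q := (HP g).2.
have Weq : orth ip W (e + q) := orthD We Wq.
have g_pq : g = p + q by rewrite addrC subrK.
set sN := `|e + q|; set a := `|p|; set c := `|q|; set G := `|g|.
set n := `|e + d + g|.
have [sN0 a0 c0 G0] : [/\ 0 <= sN, 0 <= a, 0 <= c & 0 <= G] by rewrite !normr_ge0.
have pyth_g : G ^+ 2 = a ^+ 2 + c ^+ 2.
  by rewrite /G g_pq normD2 ipC Wq // mulr0 addr0.
have c_le_G : c <= G by have := sqr_ge0 a; nra.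
have expand_n : n ^+ 2 = sN ^+ 2 + a ^+ 2 + `|d| ^+ 2
    + 2 * (ip d (e + q) + ip d g - ip d q).
  rewrite /n; have -> : e + d + g = (e + q) + (p + d).
    by rewrite /q addrA -(addrA e (g - p) p) subrK addrAC.
  rewrite (normD2 (e + q)) ipDr Weq // (normD2 p) add0r (ipC (e + q)) (ipC p).
  have -> : ip d p = ip d g - ip d q by rewrite -ipBr /q opprB addrC subrK.
  rewrite /sN /a; lra.
have /andP[lb1 _] : - (dl * sN) <= ip d (e + q) <= dl * sN.
  by rewrite -ler_norml; apply: near_orth; left.
have /andP[lb2 _] : - (dl * G) <= ip d g <= dl * G.
  by rewrite -ler_norml; apply: near_orth; right.
have /andP[_ ub3] : - (dl * c) <= ip d q <= dl * c.
  by rewrite -ler_norml; apply: near_orth; left.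
set Y := Num.sqrt (sN ^+ 2 + a ^+ 2).
have Y0 : 0 <= Y := sqrtr_ge0 _.
have Y2 : Y ^+ 2 = sN ^+ 2 + a ^+ 2 by rewrite sqr_sqrtr // addr_ge0 ?sqr_ge0.
have sN_le_Y : sN <= Y by have := sqr_ge0 a; nra.
have a_le_Y : a <= Y by have := sqr_ge0 sN; nra.
have G_le : G <= mu * a := stable _ bs_g.
have mu0 : 0 <= mu := le_trans ler01 mu_ge1.
have G_le_Y : G <= mu * Y by apply: (le_trans G_le); apply: ler_wpM2l.
have sum_le : sN + G + c <= (1 + 2 * mu) * Y by lra.
have Y_quad : Y ^+ 2 <= n ^+ 2 + 2 * ((1 + 2 * mu) * dl) * Y.
  have := sqr_ge0 `|d|; nra.
have L0 : 0 <= (1 + 2 * mu) * dl by rewrite mulr_ge0 // addr_ge0 ?mulr_ge0.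
have Y_le := sq_le_affine Y0 (normr_ge0 _) L0 Y_quad.
have e_le : `|e| <= sN + c by have := ler_normB (e + q) q; rewrite addrK.
have cs : sN + c <= mu * Y.
  apply: add_le_sqrt_sum => //; rewrite -pyth_g -exprMn ler_sqr ?nnegrE //; nra.
by apply: (le_trans e_le); apply: (le_trans cs); apply: ler_wpM2l.
Qed.

Lemma pbdw_bound {x us} : Vw ip W (P x) us ->
  (forall v, Vw ip W (P x) v ->
     setdist us (affine ub bs) <= setdist v (affine ub bs)) ->
  `|x - us| <= mu * setdist x (affine ub bs).
Proof.
move=> Vus us_min; set A := affine ub bs.
have A0 : A !=set0 by exists ub, 0; [exact: lspan0 | rewrite addr0].
have mu_gt0 : 0 < mu := lt_le_trans ltr01 mu_ge1.
have We : orth ip W (x - us) := Vw_proj_orth HP Vus.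
have D0 : 0 <= setdist us A := setdist_ge0 us A0.
rewrite -ler_pdivrMl //; apply: setdist_ge => // z Az; rewrite ler_pdivrMl //.
apply/ler_addgt0Pr => eps eps0.
set dl := eps / (2 * mu * (1 + 2 * mu)).
have dl0 : 0 < dl by apply: divr_gt0 => //; nra.
have [y Ay near_y] := setdist_approx_sq us A0 (exprn_gt0 2 dl0).
(* us - y is almost orthogonal to W^perp, since us minimizes dist(., A) on
   V_{P x}, and to lspan bs, since y almost minimizes |us - .| on A. *)
have near_orth m : orth ip W m \/ lspan bs m -> `|ip (us - y) m| <= dl * `|m|.
  move=> m_dir; apply: approx_orth D0 (ltW dl0) near_y _ => s.
  case: m_dir => m_dir.
    have Vs : Vw ip W (P x) (us + s *: m).
      by rewrite /Vw /= addrAC; exact: orthD Vus (orthZ s m_dir).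
    by apply: le_trans (us_min _ Vs) _; rewrite -addrAC; apply: setdist_le.
  have Ay' : A (y + (- s) *: m) by apply: affine_add Ay (lspanZ (- s) m_dir).
  by apply: le_trans (setdist_le us Ay') _; rewrite scaleNr opprD opprK addrA.
have error_eq : mu * (`|x - z| + 2 * ((1 + 2 * mu) * dl)) = mu * `|x - z| + eps.
  by rewrite /dl; field; apply/andP; split; rewrite gt_eqF //; nra.
have := pbdw_estimate (ltW dl0) We (affine_diff Ay Az) near_orth.
by rewrite !subrKA error_eq.
Qed.

End PBDW.

End InnerProduct.

Section Selection.
Context {R : realType} {V : normedModType R}.
Implicit Types (ip : V -> V -> R) (W M : set V).

(* mu(M, W) >= 0 when M is nonempty: the pair (x, x) shows delta_1 >= 0. *)
Lemma muMW_ge0 ip W M : M !=set0 -> orth ip W 0 -> 0 <= fine (muMW ip W M).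
Proof.
move=> [x Mx] orth0; apply/fine_ge0/mule_ge0; first by rewrite lee_fin.
have x_near : Msig M 1 x.
  by apply: le_trans (setdist_le x Mx) _; rewrite subrr normr0.
have delta1 : (0 <= delta ip W M 1)%E.
  apply: ereal_sup_ubound; exists (x, x); last by rewrite subrr normr0.
  by split => //; rewrite subrr.
apply: le_trans (ereal_sup_ubound _); last by exists 1 => //; exact: ltr01.
by rewrite invr1 mule1.
Qed.

Lemma orth_gap_le {ip W M x v} : M x -> orth ip W (x - v) ->
  delta ip W M 0 = 0%E -> (muMW ip W M < +oo)%E ->
  `|x - v| <= 2 * fine (muMW ip W M) * setdist v M.
Proof.
move=> Mx xv_orth delta0 mu_fin.
set sg := setdist v M; have sg0 : 0 <= sg by apply: setdist_ge0; exists x.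
have gap_le : ((`|x - v|)%:E <= delta ip W M sg)%E.
  apply: ereal_sup_ubound; exists (x, v) => //; split => //.
  - by apply: le_trans (setdist_le x Mx) _; rewrite subrr normr0.
  - exact: lexx.
have [sg_eq0|sg_neq0] := eqVneq sg 0.
  by move: gap_le; rewrite sg_eq0 delta0 lee_fin mulr0.
have sg_gt0 : 0 < sg by rewrite lt_def sg_neq0.
pose Sup := ereal_sup
  [set (delta ip W M s * (s^-1)%:E)%E | s in [set s : R | 0 < s]].
have ratio_le : ((`|x - v| / sg)%:E <= Sup)%E.
  apply: le_trans (ereal_sup_ubound _); last by exists sg.
  by rewrite EFinM lee_wpmul2r // lee_fin invr_ge0.
have muE : muMW ip W M = ((2^-1)%:E * Sup)%E by [].
rewrite muE in mu_fin *; clear muE; clearbody Sup.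
case: Sup ratio_le mu_fin => [m| |] //= ratio_le mu_fin.
- rewrite lee_fin ler_pdivrMr // in ratio_le.
  by rewrite mulrA mulfV ?pnatr_eq0 // mul1r.
- by rewrite gt0_muley ?lte_fin ?invr_gt0 // in mu_fin.
Qed.

Lemma surrogate_dist_le {S : V -> R} {M} {r RR : R} {v v'} : 0 < r ->
  (forall w, r * setdist w M <= S w /\ S w <= RR * setdist w M) ->
  S v <= S v' -> setdist v M <= RR / r * setdist v' M.
Proof.
move=> r_gt0 equiv Sv_le; rewrite mulrAC ler_pdivlMr // mulrC.
exact: le_trans (equiv v).1 (le_trans Sv_le (equiv v').2).
Qed.

End Selection.

Theorem theorem3p4 (R : realType) (V : completeNormedModType R)
  (ip : V -> V -> R)
  (d : nat) (Y : set 'rV[R]_d) (u : 'rV[R]_d -> V)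
  (eW : seq V) (P : V -> V)
  (K : nat) (Mk : 'I_K -> set V) (ubar : 'I_K -> V) (b : 'I_K -> seq V)
  (eps : 'I_K -> R) (ustar : 'I_K -> V -> V)
  (S : V -> R) (r RR : R) :
  is_inner_product ip ->
  compact Y -> {within Y, continuous u} ->
  (* W = lspan eW, of dimension m = size eW, P = P_W *)
  lin_indep eW -> is_orth_proj ip (lspan eW) P ->
  (* reduced model family *)
  u @` Y = \bigcup_(k in [set: 'I_K]) Mk k ->
  (forall k, lin_indep (b k) /\ (size (b k) <= size eW)%N) ->
  (forall k x, Mk k x -> setdist x (affine (ubar k) (b k)) <= eps k) ->
  (forall k, (muEW ip (lspan eW) P (lspan (b k)) < +oo)%E) ->
  (* PBDW estimators: u_k^*(w) minimizes setdist(., V_k) over V_w *)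
  (forall k w, lspan eW w ->
     Vw ip (lspan eW) w (ustar k w) /\
     (forall v, Vw ip (lspan eW) w v ->
        setdist (ustar k w) (affine (ubar k) (b k)) <= setdist v (affine (ubar k) (b k)))) ->
  (* surrogate *)
  0 < r -> r <= RR ->
  (forall v, r * setdist v (u @` Y) <= S v /\ S v <= RR * setdist v (u @` Y)) ->
  (* assumptions of the theorem *)
  delta ip (lspan eW) (u @` Y) 0 = 0%E ->
  (muMW ip (lspan eW) (u @` Y) < +oo)%E ->
  forall x, (u @` Y) x ->
  forall ks : 'I_K, (forall k, S (ustar ks (P x)) <= S (ustar k (P x))) ->
  (forall k, `|x - ustar ks (P x)|
       <= 2 * fine (muMW ip (lspan eW) (u @` Y)) * (RR / r) * `|x - ustar k (P x)|) /\
  (forall sigma, 0 < sigma ->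
     (forall k, fine (muEW ip (lspan eW) P (lspan (b k))) * eps k <= sigma) ->
     `|x - ustar ks (P x)| <= 2 * fine (muMW ip (lspan eW) (u @` Y)) * (RR / r) * sigma).
Proof.
move=> ip_inner _ _ _ HP cover _ eps_bound muk_fin estimators r_gt0 r_le_RR
  surrogate delta0 muM_fin x Mx ks ks_min.
set M := u @` Y; set W := lspan eW; set mM := fine (muMW ip W M).
have WPx : W (P x) := (HP x).1.
have err_orth k : orth ip W (x - ustar k (P x)).
  exact: (Vw_proj_orth ip_inner HP (estimators k _ WPx).1).
have mM_ge0 : 0 <= mM.
  by apply: muMW_ge0; [exists x | move=> z _; exact: ip0l ip_inner z].
have kappa_ge0 : 0 <= RR / r by apply: divr_ge0; lra.
have mM2_ge0 : 0 <= 2 * mM by apply: mulr_ge0; [exact: ler0n | exact: mM_ge0].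
have C_ge0 : 0 <= 2 * mM * (RR / r) by apply: mulr_ge0.
have selected_le k :
    `|x - ustar ks (P x)| <= 2 * mM * (RR / r) * `|x - ustar k (P x)|.
  apply: le_trans (orth_gap_le Mx (err_orth ks) delta0 muM_fin) _.
  rewrite -/M -/mM -[X in _ <= X]mulrA; apply: ler_wpM2l => //.
  apply: le_trans (surrogate_dist_le r_gt0 surrogate (ks_min k)) _.
  by apply: ler_wpM2l => //; rewrite distrC; apply: setdist_le.
split=> // sigma _ admissible.
have [k _ Mk_x] : (\bigcup_(k in [set: 'I_K]) Mk k) x by rewrite -cover.
have [mu_ge1 stable] := muEW_bound ip_inner HP (muk_fin k).
have pbdw := pbdw_bound ip_inner HP mu_ge1 stable
  (estimators k _ WPx).1 (estimators k _ WPx).2.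
apply: le_trans (selected_le k) _; rewrite ler_wpM2l //.
apply: le_trans pbdw (le_trans _ (admissible k)).
by rewrite ler_wpM2l ?eps_bound //; lra.
Qed.
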